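(* Let $V$ be a filled sparsity pattern, $X\in\mathbb S^n_V$ positive definite with $X=LDL^T$, and $S=\mathcal P(X^{-1})$. For each $j$ with $I_j\neq\emptyset$ let $R_j$ be an upper triangular matrix with $S_{I_jI_j}=R_jR_j^T$. Define the Hessian map $\mathcal H:\mathbb S^n_V\to\mathbb S^n_V$, $\mathcal H(Y)=\mathcal P(X^{-1}YX^{-1})$, and the linear map $\mathcal R:\mathbb S^n_V\to\mathbb S^n_V$ as follows: for $Y\in\mathbb S^n_V$ let $L',D'$ be the derivatives at $t=0$ of the factors $L(t),D(t)$ in $X+tY=L(t)D(t)L(t)^T$ ($L(t)$ unit lower triangular, $D(t)$ positive diagonal), and let $W=\mathcal R(Y)\in\mathbb S^n_V$ be given by $$W_{jj}=\frac{D'_{jj}}{D_{jj}},\qquad W_{I_j j}=D_{jj}^{1/2}R_j^TL'_{I_j j}\quad(j=1,\dots,n).$$ Then for all $Y,Z\in\mathbb S^n_V$, $$\operatorname{tr}(X^{-1}YX^{-1}Z)=\operatorname{tr}\big(\mathcal R(Y)\,\mathcal R(Z)\big),$$ i.e., $\mathcal H=\mathcal R^{\mathrm{adj}}\circ\mathcal R$ where the adjoint is with respect to the trace inner product on $\mathbb S^n_V$.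
   Context: A symmetric sparsity pattern $V$ is a set of pairs $(i,j)$ with $1\le j\le i\le n$ containing all $(i,i)$; it is filled (chordal) if $i>j>k$, $(i,k)\in V$, $(j,k)\in V$ imply $(i,j)\in V$. $\mathbb S^n_V$ is the set of real symmetric $n\times n$ matrices with $X_{ij}=X_{ji}=0$ whenever $i\ge j$ and $(i,j)\notin V$, with inner product $A\bullet B=\operatorname{tr}(AB)$. $\mathcal P$ is the projection onto $\mathbb S^n_V$: $\mathcal P(A)_{ij}=A_{ij}$ if $(\max(i,j),\min(i,j))\in V$ and $0$ otherwise. For each $j$, $I_j=\{i>j:(i,j)\in V\}$ (sorted increasingly). $A_{IJ}$ is the submatrix with rows $I$ and columns $J$; $A_{Ij}$ the part of column $j$ with rows in $I$. It is known that the Cholesky factor of a positive definite matrix in $\mathbb S^n_V$ has no nonzeros outside $V$, so $L'_{ij}=0$ for $i>j$, $i\notin I_j$. *)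

(* matrices over a real closed field R (needed for sqrt). *)
From HB Require Import structures.
From mathcomp Require Import all_boot all_order all_algebra.
Set Implicit Arguments. Unset Strict Implicit. Unset Printing Implicit Defensive.
Import Order.TTheory GRing.Theory Num.Theory.
Local Open Scope ring_scope.

Section Defs.
Variable R : rcfType.
Variable n : nat.

(* A sparsity pattern is a boolean relation V on 'I_n; only pairs (i,j) with
   j <= i are meaningful. *)
Definition is_pattern (V : 'I_n -> 'I_n -> bool) := forall i, V i i.

Definition filled (V : 'I_n -> 'I_n -> bool) :=
  forall i j k : 'I_n, (j < i)%N -> (k < j)%N -> V i k -> V j k -> V i j.

Definition inPat (V : 'I_n -> 'I_n -> bool) (i j : 'I_n) : bool :=
  if (j <= i)%N then V i j else V j i.

Definition inSV (V : 'I_n -> 'I_n -> bool) (X : 'M[R]_n) :=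
  X^T = X /\ forall i j, ~~ inPat V i j -> X i j = 0.

Definition projP (V : 'I_n -> 'I_n -> bool) (A : 'M[R]_n) : 'M[R]_n :=
  \matrix_(i, j) (if inPat V i j then A i j else 0).

Definition Iset (V : 'I_n -> 'I_n -> bool) (j : 'I_n) : {set 'I_n} :=
  [set i : 'I_n | (j < i)%N && V i j].

Definition posdef (X : 'M[R]_n) :=
  X^T = X /\ forall v : 'cV[R]_n, v != 0 -> 0 < (v^T *m X *m v) 0 0.

Definition unit_lower (L : 'M[R]_n) :=
  (forall i j : 'I_n, (i < j)%N -> L i j = 0) /\ (forall i, L i i = 1).

Definition pos_diag (D : 'M[R]_n) :=
  (forall i j : 'I_n, i != j -> D i j = 0) /\ (forall i, 0 < D i i).

Definition deriv0 (f : R -> R) (l : R) :=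
  forall e : R, 0 < e -> exists2 d : R, 0 < d &
    forall t : R, 0 < `|t| < d -> `|(f t - f 0) / t - l| < e.

Definition ldl_deriv (X Y : 'M[R]_n) (Lf Df : R -> 'M[R]_n) (dL dD : 'M[R]_n) :=
  [/\ exists2 d : R, 0 < d & forall t : R, `|t| < d ->
        [/\ X + t *: Y = Lf t *m Df t *m (Lf t)^T, unit_lower (Lf t)
          & pos_diag (Df t)],
      forall i k, deriv0 (fun t => Lf t i k) (dL i k)
    & forall i k, deriv0 (fun t => Df t i k) (dD i k)].

(* R_j is represented by an n x n matrix Rf j supported on I_j x I_j
   (rows/columns indexed by the elements of I_j in increasing order). *)
Definition chol_blocks (V : 'I_n -> 'I_n -> bool) (S : 'M[R]_n)
    (Rf : 'I_n -> 'M[R]_n) :=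
  forall j : 'I_n,
    [/\ forall a b, Rf j a b != 0 -> (a \in Iset V j) && (b \in Iset V j),
        forall a b : 'I_n, (b < a)%N -> Rf j a b = 0
      & forall a b, a \in Iset V j -> b \in Iset V j ->
          S a b = \sum_(c in Iset V j) Rf j a c * Rf j b c].

Definition Wcol (V : 'I_n -> 'I_n -> bool) (D : 'M[R]_n) (Rf : 'I_n -> 'M[R]_n)
    (dL : 'M[R]_n) (a j : 'I_n) : R :=
  Num.sqrt (D j j) * \sum_(c in Iset V j) Rf j c a * dL c j.

Definition Rmap (V : 'I_n -> 'I_n -> bool) (D : 'M[R]_n) (Rf : 'I_n -> 'M[R]_n)
    (dL dD : 'M[R]_n) : 'M[R]_n :=
  \matrix_(i, k)
    (if i == k then dD i i / D i i
     else if (k < i)%N then (if i \in Iset V k then Wcol V D Rf dL i k else 0)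
     else (if k \in Iset V i then Wcol V D Rf dL k i else 0)).

End Defs.

(* Write X = L D L^T.  Differentiating X + tY = L(t) D(t) L(t)^T at t = 0
   gives Y = L' D L^T + L D' L^T + L D L'^T with L' strictly lower and D'
   diagonal (by uniqueness of the LDL^T factorization, L(0) = L, D(0) = D).
   Setting N = L^-1 L', we get Y = L (N D + D' + D N^T) L^T, hence
     tr(X^-1 Y X^-1 Z) = tr(D^-1 A_Y D^-1 A_Z),  A = N D + D' + D N^T,
   which splits into a diagonal part sum_a D'_aa D'_aa / D_aa^2 and twice an
   off-diagonal part sum_b D_bb (L'_Y^T X^-1 L'_Z)_bb.  Since V is filled,
   L and L' have no fill outside V, so column b of L' is supported on I_b and
   (L'_Y^T X^-1 L'_Z)_bb only involves S_{I_b I_b} = R_b R_b^T; this is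
   exactly the off-diagonal part of tr(R(Y) R(Z)). *)
From Pilot Require Import Defs.
From HB Require Import structures.
From mathcomp Require Import all_boot all_order all_algebra.
From mathcomp Require Import ring lra.
Import Order.TTheory GRing.Theory Num.Theory.
Local Open Scope ring_scope.

Set Implicit Arguments. Unset Strict Implicit. Unset Printing Implicit Defensive.

Section LimitsAtZero.
Variable R : rcfType.
Implicit Types f g : R -> R.

Definition lim0 f (l : R) := forall e : R, 0 < e -> exists2 d : R, 0 < d &
    forall t : R, 0 < `|t| < d -> `|f t - l| < e.

Lemma lim0_near f g l d0 : 0 < d0 ->
  (forall t, 0 < `|t| < d0 -> f t = g t) -> lim0 f l -> lim0 g l.
Proof.
move=> d0p fg fl e ep; have [d dp H] := fl e ep.
exists (Num.min d d0); first by rewrite lt_min dp d0p.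
move=> t /andP[t0]; rewrite lt_min => /andP[td td0].
by rewrite -fg ?t0 ?td0 //; apply: H; rewrite t0 td.
Qed.

Lemma lim0_const c : lim0 (fun _ => c) c.
Proof. by move=> e ep; exists 1 => // t _; rewrite subrr normr0. Qed.

Lemma lim0_id : lim0 id 0.
Proof. by move=> e ep; exists e => // t /andP[_]; rewrite subr0. Qed.

Lemma lim0_add f g a b : lim0 f a -> lim0 g b -> lim0 (fun t => f t + g t) (a + b).
Proof.
move=> fa gb e ep.
have e2 : 0 < e / 2 by rewrite divr_gt0.
have [d1 d1p H1] := fa _ e2; have [d2 d2p H2] := gb _ e2.
exists (Num.min d1 d2); first by rewrite lt_min d1p d2p.
move=> t /andP[t0]; rewrite lt_min => /andP[td1 td2].
have h1 : `|f t - a| < e / 2 by apply: H1; rewrite t0 td1.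
have h2 : `|g t - b| < e / 2 by apply: H2; rewrite t0 td2.
have := ler_normD (f t - a) (g t - b).
have -> : f t + g t - (a + b) = (f t - a) + (g t - b) by ring.
lra.
Qed.

Lemma lim0_mul f g a b : lim0 f a -> lim0 g b -> lim0 (fun t => f t * g t) (a * b).
Proof.
move=> fa gb e ep.
set K := 1 + `|a| + `|b|.
have Kp : 0 < K by rewrite /K; have := normr_ge0 a; have := normr_ge0 b; lra.
set e1 := Num.min 1 (e / K).
have e1p : 0 < e1 by rewrite lt_min ltr01 divr_gt0.
have e11 : e1 <= 1 by rewrite ge_min lexx.
have e1K : e1 * K <= e by rewrite -ler_pdivlMr // ge_min lexx orbT.
have [d1 d1p H1] := fa _ e1p; have [d2 d2p H2] := gb _ e1p.
exists (Num.min d1 d2); first by rewrite lt_min d1p d2p.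
move=> t /andP[t0]; rewrite lt_min => /andP[td1 td2].
have h1 : `|f t - a| < e1 by apply: H1; rewrite t0 td1.
have h2 : `|g t - b| < e1 by apply: H2; rewrite t0 td2.
have -> : f t * g t - a * b = (f t - a) * (g t - b) + a * (g t - b) + b * (f t - a)
  by ring.
have n1 := ler_normD ((f t - a) * (g t - b) + a * (g t - b)) (b * (f t - a)).
have n2 := ler_normD ((f t - a) * (g t - b)) (a * (g t - b)).
rewrite !normrM in n1 n2.
have x0 := normr_ge0 (f t - a); have y0 := normr_ge0 (g t - b).
have a0 := normr_ge0 a; have b0 := normr_ge0 b.
have xy : `|f t - a| * `|g t - b| <= `|f t - a|
  by rewrite -{2}(mulr1 `|f t - a|) ler_wpM2l //; lra.
have ay : `|a| * `|g t - b| <= `|a| * e1 by rewrite ler_wpM2l //; lra.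
have bx : `|b| * `|f t - a| <= `|b| * e1 by rewrite ler_wpM2l //; lra.
rewrite /K in e1K; nra.
Qed.

Lemma lim0_unique f a b : lim0 f a -> lim0 f b -> a = b.
Proof.
move=> fa fb; apply/eqP; apply/negPn/negP => nab.
have e : 0 < `|a - b| / 2 by rewrite divr_gt0 // normr_gt0 subr_eq0.
have [d1 d1p H1] := fa _ e; have [d2 d2p H2] := fb _ e.
set t := Num.min d1 d2 / 2.
have m0 : 0 < Num.min d1 d2 by rewrite lt_min d1p d2p.
have t0 : 0 < t by rewrite divr_gt0.
have : t < Num.min d1 d2 by rewrite /t ltr_pdivrMr //; lra.
rewrite lt_min => /andP[td1 td2].
have nt : `|t| = t by rewrite gtr0_norm.
have h1 : `|f t - a| < `|a - b| / 2 by apply: H1; rewrite nt t0 td1.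
have h2 : `|f t - b| < `|a - b| / 2 by apply: H2; rewrite nt t0 td2.
have := ler_normD (a - f t) (f t - b).
have -> : a - f t + (f t - b) = a - b by ring.
rewrite distrC in h1; lra.
Qed.

Lemma deriv0_cont f l : Defs.deriv0 f l -> lim0 f (f 0).
Proof.
move=> H.
have := lim0_add (lim0_const (f 0)) (lim0_mul lim0_id H).
rewrite mul0r addr0; apply: (@lim0_near _ _ _ 1) => // t /andP[t0 _].
by rewrite normr_gt0 in t0; rewrite /= mulrC divfK // addrC subrK.
Qed.

Lemma deriv0_near f g l d0 : 0 < d0 ->
  (forall t, `|t| < d0 -> f t = g t) -> Defs.deriv0 f l -> Defs.deriv0 g l.
Proof.
move=> d0p fg; apply: (@lim0_near (fun t => (f t - f 0) / t) _ _ d0) => //.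
by move=> t /andP[_ td]; rewrite !fg // normr0.
Qed.

Lemma deriv0_unique f a b : Defs.deriv0 f a -> Defs.deriv0 f b -> a = b.
Proof. exact: lim0_unique. Qed.

Lemma deriv0_locally_const f (c l : R) d : 0 < d ->
  (forall t, `|t| < d -> f t = c) -> Defs.deriv0 f l -> l = 0.
Proof.
move=> dp fc fl; apply: (deriv0_unique fl).
apply: (@deriv0_near (fun _ => c) _ _ d) => // [t td|e ep]; first by rewrite fc.
by exists 1 => // t _; rewrite subrr mul0r subrr normr0.
Qed.

Lemma deriv0_affine (x y : R) : Defs.deriv0 (fun t => x + t * y) y.
Proof.
apply: (@lim0_near (fun _ => y) _ _ 1) => //; last exact: lim0_const.
move=> t /andP[t0 _]; rewrite normr_gt0 in t0.
by rewrite mul0r addr0 addrC addKr mulrC mulKf.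
Qed.

Lemma deriv0_add f g a b :
  Defs.deriv0 f a -> Defs.deriv0 g b -> Defs.deriv0 (fun t => f t + g t) (a + b).
Proof.
move=> fa gb; have := lim0_add fa gb.
by apply: (@lim0_near _ _ _ 1) => // t _; rewrite /= -mulrDl; congr (_ * _); ring.
Qed.

Lemma deriv0_mul f g a b : Defs.deriv0 f a -> Defs.deriv0 g b ->
  Defs.deriv0 (fun t => f t * g t) (a * g 0 + f 0 * b).
Proof.
move=> fa gb.
have := lim0_add (lim0_mul fa (deriv0_cont gb)) (lim0_mul (lim0_const (f 0)) gb).
apply: (@lim0_near _ _ _ 1) => // t /andP[t0 _]; rewrite normr_gt0 in t0.
by rewrite /=; ring.
Qed.

Lemma deriv0_sum (I : Type) (r : seq I) (F : I -> R -> R) (l : I -> R) :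
  (forall i, Defs.deriv0 (F i) (l i)) ->
  Defs.deriv0 (fun t => \sum_(i <- r) F i t) (\sum_(i <- r) l i).
Proof.
move=> H; elim: r => [|x r IH].
  rewrite big_nil; apply: (@deriv0_near (fun _ => 0) _ _ 1) => // [t _|e ep].
    by rewrite big_nil.
  by exists 1 => // t _; rewrite subrr mul0r subrr normr0.
apply: (@deriv0_near (fun t => F x t + \sum_(i <- r) F i t) _ _ 1) => //.
  by move=> t _; rewrite big_cons.
by rewrite big_cons; exact: deriv0_add.
Qed.

End LimitsAtZero.

Section MatrixShapes.
Variable R : rcfType.
Variable n : nat.

Definition is_diag (D : 'M[R]_n) := forall i j : 'I_n, i != j -> D i j = 0.

Definition strictly_lower (M : 'M[R]_n) := forall i j : 'I_n, (i <= j)%N -> M i j = 0.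

Lemma ord_strong_ind (P : 'I_n -> Prop) :
  (forall j : 'I_n, (forall k : 'I_n, (k < j)%N -> P k) -> P j) -> forall j, P j.
Proof.
move=> H; suff main m (j : 'I_n) : (j < m)%N -> P j by move=> j; exact: (main j.+1).
elim: m j => [//|m IH] j jm; apply: H => k kj; apply: IH.
exact: leq_trans kj jm.
Qed.

Lemma ord_lt_eqF (a b : 'I_n) : (a < b)%N -> (a == b) = false.
Proof. exact: ltn_eqF. Qed.

Lemma mulmx_diag_entry (A D C : 'M[R]_n) i j : is_diag D ->
  (A *m D *m C^T) i j = \sum_k A i k * D k k * C j k.
Proof.
move=> Dd; rewrite mxE; apply: eq_bigr => k _.
rewrite !mxE (bigD1 k) //= big1 ?addr0 // => l lk.
by rewrite Dd ?mulr0.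
Qed.

Lemma diag_mx_of_diag (D : 'M[R]_n) : is_diag D -> D = diag_mx (\row_i D i i).
Proof.
move=> Dd; apply/matrixP => i j; rewrite !mxE.
by case: (eqVneq i j) => [->|ij]; rewrite ?mulr1n // Dd // mulr0n.
Qed.

Definition diag_inv (D : 'M[R]_n) : 'M[R]_n := diag_mx (\row_i (D i i)^-1).

Lemma mxtrace_mul_entries (A B : 'M[R]_n) :
  \tr (A *m B) = \sum_a \sum_b A a b * B b a.
Proof. by apply: eq_bigr => a _; rewrite mxE. Qed.

Lemma mxtrace_diag_sandwich (w : 'rV[R]_n) (A B : 'M[R]_n) :
  \tr (diag_mx w *m A *m diag_mx w *m B) =
  \sum_a \sum_b w 0 a * A a b * w 0 b * B b a.
Proof.
rewrite mxtrace_mul_entries; apply: eq_bigr => a _; apply: eq_bigr => b _.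
by rewrite mul_mx_diag mul_diag_mx !mxE.
Qed.

Lemma sum_split_sym (G : 'I_n -> 'I_n -> R) (dg : 'I_n -> R) (H : 'I_n -> 'I_n -> R) :
  (forall a, G a a = dg a) ->
  (forall a b : 'I_n, (b < a)%N -> G a b = H a b) ->
  (forall a b : 'I_n, (a < b)%N -> G a b = H b a) ->
  \sum_a \sum_b G a b =
  \sum_a dg a + (\sum_(b : 'I_n) \sum_(a : 'I_n) (if (b < a)%N then H a b else 0)) *+ 2.
Proof.
move=> Gd Gl Gu.
have e (a b : 'I_n) : G a b = ((if a == b then dg a else 0) +
   (if (b < a)%N then H a b else 0)) + (if (a < b)%N then H b a else 0).
  case: (ltngtP a b) => [ab|ba|/val_inj ab].
  - by rewrite Gu // ord_lt_eqF // !add0r.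
  - by rewrite Gl // eq_sym ord_lt_eqF // add0r addr0.
  - by rewrite ab Gd eqxx !addr0.
under eq_bigr => a _ do under eq_bigr => b _ do rewrite e.
under eq_bigr => a _ do rewrite !big_split /=.
rewrite !big_split /= mulr2n addrA; congr (_ + _ + _).
- apply: eq_bigr => a _; rewrite -big_mkcond /=.
  by rewrite (big_pred1 a) // => b; rewrite eq_sym.
- by rewrite exchange_big.
Qed.

(* The LDL^T factorization (L unit lower, D positive diagonal) is unique:
   column j of L D L^T determines D_jj and column j of L, given the earlier ones. *)
Lemma ldl_unique (L1 D1 L2 D2 : 'M[R]_n) :
  unit_lower L1 -> pos_diag D1 -> unit_lower L2 -> pos_diag D2 ->
  L1 *m D1 *m L1^T = L2 *m D2 *m L2^T -> L1 = L2 /\ D1 = D2.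
Proof.
move=> [U1 O1] [Z1 P1] [U2 O2] [Z2 P2] E.
have key : forall j : 'I_n, D1 j j = D2 j j /\ forall i, L1 i j = L2 i j.
  apply: ord_strong_ind => j IH.
  have col i : L1 i j * D1 j j = L2 i j * D2 j j.
    have := congr1 (fun M : 'M[R]_n => M i j) E => /=.
    rewrite !mulmx_diag_entry //.
    rewrite [X in X = _ -> _](bigD1 j) // [X in _ = X -> _](bigD1 j) //= O1 O2 !mulr1.
    move=> h; apply: (addIr (\sum_(k | k != j) L1 i k * D1 k k * L1 j k)).
    rewrite [in LHS]h; congr (_ + _); apply: eq_bigr => k kj.
    case: (ltngtP k j) => [kj'|jk|/val_inj kj'].
    - by have [-> ->] := IH k kj'; rewrite (proj2 (IH k kj')).
    - by rewrite (U1 j k) // (U2 j k) // !mulr0.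
    - by rewrite kj' eqxx in kj.
  have dj : D1 j j = D2 j j by have := col j; rewrite O1 O2 !mul1r.
  split => // i; have := col i; rewrite dj => /mulIf; apply.
  by rewrite gt_eqF.
split; apply/matrixP => i j; first by have [_ ->] := key j.
by case: (eqVneq i j) => [->|ij]; [have [-> _] := key j | rewrite Z1 // Z2].
Qed.

(* A unit lower triangular matrix has determinant 1. *)
Lemma unit_lower_unitmx (L : 'M[R]_n) : unit_lower L -> L \in unitmx.
Proof.
move=> [UL OL]; rewrite unitmxE det_trig; last by apply/is_trig_mxP.
by rewrite big1 ?unitr1 // => i _; rewrite OL.
Qed.

Lemma invmx_unit_lower (L : 'M[R]_n) : unit_lower L ->
  forall i j : 'I_n, (i < j)%N -> invmx L i j = 0.
Proof.
move=> UL' i j; have [UL OL] := UL'.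
have LL : L *m invmx L = 1%:M by apply/mulmxV/unit_lower_unitmx.
elim/ord_strong_ind: i => i IH ij.
have := congr1 (fun M : 'M[R]_n => M i j) LL => /=.
rewrite !mxE (bigD1 i) //= big1; last first.
  move=> k ki; case: (ltngtP k i) => [ki'|ik|/val_inj ki'].
  - by rewrite IH ?mulr0 // (ltn_trans ki' ij).
  - by rewrite (UL i k) // mul0r.
  - by rewrite ki' eqxx in ki.
by rewrite OL mul1r addr0 ord_lt_eqF.
Qed.

Lemma lower_mul_strictly_lower (A M : 'M[R]_n) :
  (forall i j : 'I_n, (i < j)%N -> A i j = 0) -> strictly_lower M ->
  strictly_lower (A *m M).
Proof.
move=> HA HM i j ij; rewrite mxE big1 // => k _.
case: (ltnP i k) => ik; first by rewrite HA // mul0r.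
by rewrite HM ?mulr0 // (leq_trans ik ij).
Qed.

End MatrixShapes.

Section LDLDerivative.
Variable R : rcfType.
Variable n : nat.

Definition mderiv (A : R -> 'M[R]_n) (A' : 'M[R]_n) :=
  forall i j, Defs.deriv0 (fun t => A t i j) (A' i j).

Lemma mderiv_mul (A B : R -> 'M[R]_n) (A' B' : 'M[R]_n) :
  mderiv A A' -> mderiv B B' -> mderiv (fun t => A t *m B t) (A' *m B 0 + A 0 *m B').
Proof.
move=> HA HB i j.
apply: (@deriv0_near _ (fun t => \sum_k A t i k * B t k j) _ _ 1) => //.
  by move=> t _; rewrite mxE.
by rewrite !mxE -big_split; apply: deriv0_sum => k; exact: deriv0_mul.
Qed.

Lemma mderiv_tr (A : R -> 'M[R]_n) (A' : 'M[R]_n) :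
  mderiv A A' -> mderiv (fun t => (A t)^T) A'^T.
Proof.
move=> HA i j; rewrite mxE.
by apply: (@deriv0_near _ (fun t => A t j i) _ _ 1) => // t _; rewrite mxE.
Qed.

Variables (X Y : 'M[R]_n) (Lf Df : R -> 'M[R]_n) (dL dD : 'M[R]_n).
Hypothesis HXY : ldl_deriv X Y Lf Df dL dD.

Lemma ldl_deriv_base :
  [/\ X = Lf 0 *m Df 0 *m (Lf 0)^T, unit_lower (Lf 0) & pos_diag (Df 0)].
Proof.
have [[d dp Hd] _ _] := HXY; have [] := Hd 0; first by rewrite normr0.
by rewrite scale0r addr0.
Qed.

(* L(t) has unit diagonal and zero upper part for all small t, so L' is
   strictly lower triangular; likewise D' is diagonal. *)
Lemma ldl_deriv_strictly_lower : strictly_lower dL.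
Proof.
have [[d dp Hd] HL _] := HXY; move=> i j; rewrite leq_eqVlt => /orP[/eqP/val_inj->|ij].
  by apply: (deriv0_locally_const dp _ (HL j j)) => t /Hd[_ [_ ->]].
by apply: (deriv0_locally_const dp _ (HL i j)) => t /Hd[_ [-> //]].
Qed.

Lemma ldl_deriv_diag : is_diag dD.
Proof.
have [[d dp Hd] _ HD] := HXY; move=> i j ij.
by apply: (deriv0_locally_const dp _ (HD i j)) => t /Hd[_ _ [-> //]].
Qed.

(* Product rule applied to X + tY = L(t) D(t) L(t)^T. *)
Lemma ldl_deriv_product :
  Y = dL *m Df 0 *m (Lf 0)^T + Lf 0 *m dD *m (Lf 0)^T + Lf 0 *m Df 0 *m dL^T.
Proof.
have [[d dp Hd] HL HD] := HXY; apply/matrixP => i j.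
have h1 : Defs.deriv0 (fun t => (Lf t *m Df t *m (Lf t)^T) i j)
   (((dL *m Df 0 + Lf 0 *m dD) *m (Lf 0)^T + (Lf 0 *m Df 0) *m dL^T) i j).
  by apply: mderiv_mul; [exact: mderiv_mul | exact: mderiv_tr].
have h2 : Defs.deriv0 (fun t => (Lf t *m Df t *m (Lf t)^T) i j) (Y i j).
  apply: (@deriv0_near _ (fun t => X i j + t * Y i j) _ _ d) => //.
    by move=> t /Hd[<- _ _]; rewrite !mxE.
  exact: deriv0_affine.
by rewrite (deriv0_unique h2 h1) mulmxDl !mxE.
Qed.

(* If X = L D L^T is the LDL^T factorization, then L(0) = L, D(0) = D. *)
Lemma ldl_tangent (L D : 'M[R]_n) :
  unit_lower L -> pos_diag D -> X = L *m D *m L^T ->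
  Y = dL *m D *m L^T + L *m dD *m L^T + L *m D *m dL^T.
Proof.
move=> UL PD XE; have [X0 UL0 PD0] := ldl_deriv_base.
have [LE DE] := ldl_unique UL0 PD0 UL PD (etrans (esym X0) XE).
by rewrite {1}ldl_deriv_product LE DE.
Qed.

End LDLDerivative.

Section NoFill.
Variable R : rcfType.
Variable n : nat.
Variable V : 'I_n -> 'I_n -> bool.
Hypothesis fV : filled V.

Definition lower_in_pattern (M : 'M[R]_n) :=
  forall i j : 'I_n, (j < i)%N -> ~~ V i j -> M i j = 0.

Lemma inPat_lt (i j : 'I_n) : (j < i)%N -> inPat V i j = V i j.
Proof. by rewrite /inPat => /ltnW ->. Qed.

(* The LDL^T factor of a matrix in S^n_V has no fill outside V, by induction
   on columns: for (i,j) outside V, filledness kills every earlier term. *)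
Lemma ldl_no_fill (X L D : 'M[R]_n) :
  inSV V X -> unit_lower L -> pos_diag D -> X = L *m D *m L^T ->
  lower_in_pattern L.
Proof.
move=> [_ XV] [UL OL] [DZ DP] XE.
suff col (j i : 'I_n) : (j < i)%N -> ~~ V i j -> L i j = 0 by move=> i j; exact: col.
elim/ord_strong_ind: j i => j IH i ji nV.
have := XV i j; rewrite inPat_lt // nV XE mulmx_diag_entry // => /(_ isT).
rewrite (bigD1 j) //= big1 ?addr0; last first.
  move=> k kj; case: (ltngtP k j) => [kj'|jk|/val_inj kj'].
  - case Vik: (V i k); last by rewrite (IH k kj' i) ?Vik ?(ltn_trans kj') // !mul0r.
    case Vjk: (V j k); last by rewrite (IH k kj' j) ?Vjk // mulr0.
    by move: nV; rewrite (fV ji kj' Vik Vjk).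
  - by rewrite (UL j k) // mulr0.
  - by rewrite kj' eqxx in kj.
by rewrite OL mulr1 => /eqP; rewrite mulf_eq0 (gt_eqF (DP j)) orbF => /eqP.
Qed.

(* The same column induction for the tangent equation shows that L' has no
   fill outside V either. *)
Lemma tangent_no_fill (Y L D M E : 'M[R]_n) :
  inSV V Y -> unit_lower L -> pos_diag D -> is_diag E ->
  lower_in_pattern L -> strictly_lower M ->
  Y = M *m D *m L^T + L *m E *m L^T + L *m D *m M^T ->
  lower_in_pattern M.
Proof.
move=> [_ YV] [UL OL] [DZ DP] Ed Ls Mu YE.
suff col (j i : 'I_n) : (j < i)%N -> ~~ V i j -> M i j = 0 by move=> i j; exact: col.
elim/ord_strong_ind: j i => j IH i ji nV.
have addE (A B : 'M[R]_n) : (A + B) i j = A i j + B i j by rewrite mxE.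
have := YV i j; rewrite inPat_lt // nV YE !addE !mulmx_diag_entry // => /(_ isT).
rewrite -!big_split /= (bigD1 j) //= big1 ?addr0; last first.
  move=> k kj; case: (ltngtP k j) => [kj'|jk|/val_inj kj'].
  - case Vik: (V i k); last by rewrite (IH k kj' i) ?Vik ?(ltn_trans kj') // (Ls i k)
      ?Vik ?(ltn_trans kj') //; ring.
    case Vjk: (V j k); last by rewrite (IH k kj' j) ?Vjk // (Ls j k) ?Vjk //; ring.
    by move: nV; rewrite (fV ji kj' Vik Vjk).
  - by rewrite (UL j k) // (Mu j k (ltnW jk)); ring.
  - by rewrite kj' eqxx in kj.
rewrite OL (Ls i j) // (Mu j j) //.
have -> : M i j * D j j * 1 + 0 * E j j * 1 + 0 * D j j * 0 = M i j * D j j by ring.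
by move=> /eqP; rewrite mulf_eq0 (gt_eqF (DP j)) orbF => /eqP.
Qed.

Lemma col_support (M : 'M[R]_n) (b c : 'I_n) :
  strictly_lower M -> lower_in_pattern M -> c \notin Iset V b -> M c b = 0.
Proof.
move=> Mu Ms; rewrite inE negb_and -leqNgt => /orP[cb|nV]; first exact: Mu.
by case: (ltnP b c) => bc; [exact: Ms | exact: Mu].
Qed.

Lemma Iset_inPat (b c e : 'I_n) :
  is_pattern V -> c \in Iset V b -> e \in Iset V b -> inPat V c e.
Proof.
move=> pV; rewrite !inE => /andP[bc Vcb] /andP[be Veb].
rewrite /inPat; case: (ltngtP e c) => [ec|ce|/val_inj ->]; last by rewrite pV.
- exact: fV ec be Vcb Veb.
- exact: fV ce bc Veb Vcb.
Qed.

End NoFill.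

Section TraceIdentities.
Variable R : rcfType.
Variable n : nat.
Variables (L D : 'M[R]_n).
Hypotheses (UL : unit_lower L) (PD : pos_diag D).

Lemma invmx_ldl :
  invmx (L *m D *m L^T) = (invmx L)^T *m diag_inv D *m invmx L.
Proof.
have [Dd Dp] := PD; have Lu := unit_lower_unitmx UL.
have DDi : D *m diag_inv D = 1%:M.
  rewrite mul_mx_diag; apply/matrixP => i j; rewrite !mxE.
  case: (eqVneq i j) => [->|ij]; first by rewrite mulfV // gt_eqF.
  by rewrite (Dd i j) // mul0r.
have XQ : L *m D *m L^T *m ((invmx L)^T *m diag_inv D *m invmx L) = 1%:M.
  rewrite !mulmxA -(mulmxA (L *m D)) -trmx_mul mulVmx // trmx1 mulmx1.
  by rewrite -(mulmxA L) DDi mulmx1 mulmxV.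
have [Xu _] := mulmx1_unit XQ.
by rewrite -[LHS]mulmx1 -XQ mulmxA mulVmx // mul1mx.
Qed.

Lemma tangent_congruence (M E : 'M[R]_n) :
  M *m D *m L^T + L *m E *m L^T + L *m D *m M^T =
  L *m ((invmx L *m M) *m D + E + D *m (invmx L *m M)^T) *m L^T.
Proof.
have ME : M = L *m (invmx L *m M) by rewrite mulmxA mulmxV ?mul1mx ?unit_lower_unitmx.
rewrite [in LHS]ME; set N := invmx L *m M.
by rewrite !mulmxDr !mulmxDl trmx_mul !mulmxA.
Qed.

Lemma trace_congruence (A B : 'M[R]_n) :
  \tr (invmx (L *m D *m L^T) *m (L *m A *m L^T) *m invmx (L *m D *m L^T)
       *m (L *m B *m L^T)) =
  \tr (diag_inv D *m A *m diag_inv D *m B).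
Proof.
have Lu := unit_lower_unitmx UL.
have e1 : invmx L *m L = 1%:M by apply: mulVmx.
have e3 : L^T *m (invmx L)^T = 1%:M by rewrite -trmx_mul e1 trmx1.
have h1 C : (invmx L)^T *m diag_inv D *m invmx L *m (L *m C *m L^T) =
            (invmx L)^T *m diag_inv D *m C *m L^T.
  by rewrite !mulmxA -(mulmxA _ (invmx L) L) e1 mulmx1.
rewrite invmx_ldl h1 -(mulmxA _ ((invmx L)^T *m _ *m _)) h1.
rewrite !mulmxA -(mulmxA _ L^T (invmx L)^T) e3 mulmx1.
by rewrite mxtrace_mulC !mulmxA e3 mul1mx.
Qed.

Lemma hessian_trace (M1 E1 M2 E2 : 'M[R]_n) :
  strictly_lower M1 -> is_diag E1 -> strictly_lower M2 -> is_diag E2 ->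
  \tr (invmx (L *m D *m L^T) *m (M1 *m D *m L^T + L *m E1 *m L^T + L *m D *m M1^T)
       *m invmx (L *m D *m L^T) *m (M2 *m D *m L^T + L *m E2 *m L^T + L *m D *m M2^T))
  = \sum_a E1 a a / D a a * (E2 a a / D a a)
    + (\sum_b D b b * (M1^T *m invmx (L *m D *m L^T) *m M2) b b) *+ 2.
Proof.
move=> M1l E1d M2l E2d; have [Dd Dp] := PD.
have Dn0 i : D i i != 0 by rewrite gt_eqF.
have Ll := invmx_unit_lower UL.
have N1l := lower_mul_strictly_lower Ll M1l; have N2l := lower_mul_strictly_lower Ll M2l.
rewrite !tangent_congruence trace_congruence /diag_inv mxtrace_diag_sandwich.
set N1 := invmx L *m M1 in N1l *; set N2 := invmx L *m M2 in N2l *.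
have AE (N E : 'M[R]_n) a b :
    (N *m D + E + D *m N^T) a b = N a b * D b b + E a b + D a a * N b a.
  by rewrite [in LHS](diag_mx_of_diag Dd) mul_mx_diag mul_diag_mx !mxE.
have wE a : (\row_i (D i i)^-1) 0 a = (D a a)^-1 by rewrite mxE.
rewrite (@sum_split_sym _ _ _ (fun a => E1 a a / D a a * (E2 a a / D a a))
            (fun a b => N1 a b * N2 a b * D b b / D a a)); first last.
- move=> a b ab; rewrite !AE (N1l a b (ltnW ab)) (N2l a b (ltnW ab)).
  rewrite E1d ?ord_lt_eqF // E2d 1?eq_sym ?ord_lt_eqF // !wE.
  by field; rewrite !Dn0.
- move=> a b ba; rewrite !AE (N1l b a (ltnW ba)) (N2l b a (ltnW ba)).
  rewrite E1d 1?eq_sym ?ord_lt_eqF // E2d ?ord_lt_eqF // !wE.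
  by field; rewrite !Dn0.
- by move=> a; rewrite !AE (N1l a a (leqnn a)) (N2l a a (leqnn a)) !wE; ring.
have -> : M1^T *m invmx (L *m D *m L^T) *m M2 = N1^T *m diag_inv D *m N2.
  by rewrite invmx_ldl /N1 /N2 trmx_mul !mulmxA.
clearbody N1 N2; congr (_ + _ *+ 2); apply: eq_bigr => b _.
rewrite mul_mx_diag mxE big_distrr /=; apply: eq_bigr => a _.
rewrite !mxE; case: (ltnP b a) => ba /=; first by field.
by rewrite N1l //; ring.
Qed.

End TraceIdentities.

Section FactoredHessian.
Variable R : rcfType.
Variable n : nat.
Implicit Types M Q : 'M[R]_n.

Lemma bilinear_entry_support (I : {set 'I_n}) M1 Q M2 b :
  (forall c, c \notin I -> M1 c b = 0) -> (forall c, c \notin I -> M2 c b = 0) ->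
  (M1^T *m Q *m M2) b b = \sum_(c in I) \sum_(e in I) M1 c b * Q c e * M2 e b.
Proof.
move=> H1 H2.
have row e : (M1^T *m Q) b e = \sum_(c in I) M1 c b * Q c e.
  rewrite mxE (bigID (mem I)) /= [X in _ + X]big1 ?addr0 => [|c cI].
    by apply: eq_bigr => c _; rewrite mxE.
  by rewrite mxE H1 ?mul0r.
rewrite mxE (bigID (mem I)) /= [X in _ + X]big1 ?addr0 => [|e eI]; last first.
  by rewrite H2 ?mulr0.
under eq_bigr => e _ do rewrite row big_distrl /=.
by rewrite exchange_big.
Qed.

Lemma sum_gram_factor (I : {set 'I_n}) (r : 'I_n -> 'I_n -> R) (x y : 'I_n -> R) :
  \sum_(c in I) \sum_(e in I) x c * (\sum_(a in I) r c a * r e a) * y e =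
  \sum_(a in I) (\sum_(c in I) r c a * x c) * (\sum_(e in I) r e a * y e).
Proof.
symmetry; under eq_bigr => a _ do rewrite big_distrlr /=.
rewrite exchange_big /=; apply: eq_bigr => c _.
rewrite exchange_big /=; apply: eq_bigr => e _.
by rewrite big_distrr big_distrl /=; apply: eq_bigr => a _; ring.
Qed.

Variables (V : 'I_n -> 'I_n -> bool) (D : 'M[R]_n) (Rf : 'I_n -> 'M[R]_n).

Lemma chol_column_identity Q M1 M2 b :
  is_pattern V -> filled V -> chol_blocks V (projP V Q) Rf ->
  (forall c, c \notin Iset V b -> M1 c b = 0) ->
  (forall c, c \notin Iset V b -> M2 c b = 0) ->
  (M1^T *m Q *m M2) b b =
  \sum_(a in Iset V b) (\sum_(c in Iset V b) Rf b c a * M1 c b) *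
                      (\sum_(c in Iset V b) Rf b c a * M2 c b).
Proof.
move=> pV fV CB H1 H2; have [_ _ SE] := CB b.
rewrite (bilinear_entry_support Q H1 H2) -sum_gram_factor.
apply: eq_bigr => c cI; apply: eq_bigr => e eI.
by rewrite -SE // mxE (Iset_inPat fV pV cI eI).
Qed.

Lemma Wcol_column_sum Q M1 M2 b :
  is_pattern V -> filled V -> chol_blocks V (projP V Q) Rf -> 0 <= D b b ->
  (forall c, c \notin Iset V b -> M1 c b = 0) ->
  (forall c, c \notin Iset V b -> M2 c b = 0) ->
  \sum_(a in Iset V b) Wcol V D Rf M1 a b * Wcol V D Rf M2 a b =
  D b b * (M1^T *m Q *m M2) b b.
Proof.
move=> pV fV CB Db H1 H2; rewrite (chol_column_identity pV fV CB H1 H2) big_distrr.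
apply: eq_bigr => a _; rewrite /Wcol mulrACA -expr2 sqr_sqrtr //.
Qed.

Lemma Rmap_trace (M1 E1 M2 E2 : 'M[R]_n) :
  \tr (Rmap V D Rf M1 E1 *m Rmap V D Rf M2 E2) =
  \sum_a E1 a a / D a a * (E2 a a / D a a) +
  (\sum_b \sum_(a in Iset V b) Wcol V D Rf M1 a b * Wcol V D Rf M2 a b) *+ 2.
Proof.
rewrite mxtrace_mul_entries (@sum_split_sym _ _ _ (fun a => E1 a a / D a a * (E2 a a / D a a))
  (fun a b => if a \in Iset V b then Wcol V D Rf M1 a b * Wcol V D Rf M2 a b else 0)).
- congr (_ + _ *+ 2); apply: eq_bigr => b _; rewrite [RHS]big_mkcond /=.
  apply: eq_bigr => a _; case: ifP => //; case: ifP => // aI.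
  by move: aI; rewrite inE => /andP[->].
- by move=> a; rewrite !mxE eqxx.
- move=> a b ba; rewrite !mxE eq_sym (ord_lt_eqF ba) ba ltnNge (ltnW ba) /=.
  by case: ifP; rewrite ?mul0r.
- move=> a b ab; rewrite !mxE (ord_lt_eqF ab) eq_sym (ord_lt_eqF ab) ab ltnNge (ltnW ab) /=.
  by case: ifP; rewrite ?mul0r.
Qed.

End FactoredHessian.

Theorem mainTheorem7 (R : rcfType) (n : nat) (V : 'I_n -> 'I_n -> bool)
    (X L D : 'M[R]_n) (Rf : 'I_n -> 'M[R]_n)
    (Y Z : 'M[R]_n) (LY DY LZ DZ : R -> 'M[R]_n) (dLY dDY dLZ dDZ : 'M[R]_n) :
  is_pattern V -> filled V ->
  inSV V X -> posdef X ->
  unit_lower L -> pos_diag D -> X = L *m D *m L^T ->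
  chol_blocks V (projP V (invmx X)) Rf ->
  inSV V Y -> inSV V Z ->
  ldl_deriv X Y LY DY dLY dDY ->
  ldl_deriv X Z LZ DZ dLZ dDZ ->
  \tr (invmx X *m Y *m invmx X *m Z) =
  \tr (Rmap V D Rf dLY dDY *m Rmap V D Rf dLZ dDZ).
Proof.
move=> pV fV XV _ UL PD XE CB YV ZV HY HZ.
have YE := ldl_tangent HY UL PD XE; have ZE := ldl_tangent HZ UL PD XE.
have LY_lower := ldl_deriv_strictly_lower HY; have LZ_lower := ldl_deriv_strictly_lower HZ.
have LV := ldl_no_fill fV XV UL PD XE.
have LY_V := tangent_no_fill fV YV UL PD (ldl_deriv_diag HY) LV LY_lower YE.
have LZ_V := tangent_no_fill fV ZV UL PD (ldl_deriv_diag HZ) LV LZ_lower ZE.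
have hess := hessian_trace UL PD LY_lower (ldl_deriv_diag HY) LZ_lower (ldl_deriv_diag HZ).
rewrite YE ZE XE hess [RHS]Rmap_trace.
(* Column by column, the two off-diagonal parts agree via S_{I_b I_b} = R_b R_b^T. *)
congr (_ + _ *+ 2); apply: eq_bigr => b _.
rewrite XE in CB.
by rewrite (Wcol_column_sum pV fV CB) ?ltW ?(proj2 PD) // => c; exact: col_support.
Qed.
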